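(* Let $X$ be a real Hilbert space and $A,B$ nonempty closed convex subsets of $X$, and let $v$ be the displacement vector of $(A,B)$. Suppose there exist $e\in A\cap(B-v)$ and a continuous linear functional $x^*\in X^*$ with $\|x^*\|=1$ such that $$\inf x^*(B-v)=x^*(e)=\sup x^*(A)$$ and such that $x^*$ strongly exposes $A$ at $e$. Then the couple $(A,B)$ is stable.
   Context: $P_C$ is the metric projection onto a closed convex nonempty set $C$; $B_X$ the closed unit ball; $\mathrm{dist}(x,S)=\inf_{s\in S}\|x-s\|$, $\mathrm{dist}(S,T)=\inf_{s\in S}\mathrm{dist}(s,T)$. $v=P_{\overline{B-A}}(0)$. $E=\{a\in A:\mathrm{dist}(a,B)=\mathrm{dist}(A,B)\}$, $F=\{b\in B:\mathrm{dist}(b,A)=\mathrm{dist}(A,B)\}$. A functional $f\in X^*\setminus\{0\}$ strongly exposes $A$ at $a\in A$ if $f(a)=\sup f(A)$ and every sequence $\{x_n\}\subset A$ with $f(x_n)\to\sup f(A)$ converges in norm to $a$. Attouch–Wets convergence: for nonempty closed $C,D$ and $N\in\mathbb N$ let $e_N(C,D)=\sup_{c\in C\cap NB_X}\mathrm{dist}(c,D)$ ($0$ if $C\cap NB_X=\emptyset$), $h_N(C,D)=\max\{e_N(C,D),e_N(D,C)\}$; $C_j\to C$ if $h_N(C_j,C)\to0$ for every $N$. Given sequences $\{A_n\},\{B_n\}$ of closed convex nonempty sets and $a_0\in X$, the perturbed alternating projections sequences are $b_n=P_{B_n}(a_{n-1})$, $a_n=P_{A_n}(b_n)$ ($n\in\mathbb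 N$). The couple $(A,B)$ (with $E,F$ nonempty) is stable if for every choice of sequences $\{A_n\},\{B_n\}$ of closed convex nonempty sets converging in the Attouch–Wets sense to $A$ and $B$ respectively, and every $a_0\in X$, the corresponding perturbed alternating projections sequences $\{a_n\}$ and $\{b_n\}$ converge in norm. *)

From HB Require Import structures.
From mathcomp Require Import all_boot all_order all_algebra.
From mathcomp Require Import all_classical all_reals all_analysis.
Set Implicit Arguments. Unset Strict Implicit. Unset Printing Implicit Defensive.
Import Order.TTheory GRing.Theory Num.Theory.
Import numFieldNormedType.Exports.
Local Open Scope classical_set_scope.
Local Open Scope ring_scope.

Section Defs.
Context {R : realType} {X : normedModType R}.

Definition is_inner_product (ip : X -> X -> R) : Prop :=
  [/\ forall x y, ip x y = ip y x,
      forall (a : R) x y z, ip (a *: x + y) z = a * ip x z + ip y z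
    & forall x, `|x| ^+ 2 = ip x x].

Definition norm_from_inner_product : Prop := exists ip, is_inner_product ip.

Definition closed_convex_nonempty (C : set X) : Prop :=
  [/\ closed C, convex_set (C : set (convex_lmodType X)) & C !=set0].

Definition is_proj (C : set X) (x p : X) : Prop :=
  C p /\ forall c, C c -> `|x - p| <= `|x - c|.

Definition setdiff (B A : set X) : set X := [set b - a | b in B & a in A].

Definition displacement (A B : set X) (v : X) : Prop :=
  is_proj (closure (setdiff B A)) 0 v.

Definition dist (x : X) (S : set X) : R := inf [set `|x - s| | s in S].
Definition dist_sets (S T : set X) : R := inf [set dist s T | s in S].

Definition Eset (A B : set X) : set X := [set a | A a /\ dist a B = dist_sets A B].
Definition Fset (A B : set X) : set X := [set b | B b /\ dist b A = dist_sets A B].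

(* e_N(C,D); sup of the empty set is 0 by definition of [sup] *)
Definition excess (N : nat) (C D : set X) : R :=
  sup [set dist c D | c in C `&` [set x | `|x| <= N%:R]].
Definition hN (N : nat) (C D : set X) : R := Num.max (excess N C D) (excess N D C).

Definition AW_cvg (Cs : nat -> set X) (C : set X) : Prop :=
  forall N : nat, (fun j => hN N (Cs j) C) @ \oo --> (0 : R).

Definition perturbed_AP (As Bs : nat -> set X) (a0 : X) (a b : nat -> X) : Prop :=
  a 0%N = a0 /\ forall n : nat, is_proj (Bs n.+1) (a n) (b n.+1)
                            /\ is_proj (As n.+1) (b n.+1) (a n.+1).

Definition stable (A B : set X) : Prop :=
  Eset A B !=set0 /\ Fset A B !=set0 /\
  forall (As Bs : nat -> set X),
    (forall n, closed_convex_nonempty (As n)) ->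
    (forall n, closed_convex_nonempty (Bs n)) ->
    AW_cvg As A -> AW_cvg Bs B ->
    forall (a0 : X) (a b : nat -> X), perturbed_AP As Bs a0 a b ->
      cvg (a @ \oo) /\ cvg (b @ \oo).

Definition linear_functional (f : X -> R) : Prop :=
  forall (c : R) x y, f (c *: x + y) = c * f x + f y.

Definition dual_norm (f : X -> R) : R := sup [set `|f x| | x in [set x | `|x| <= 1]].

Definition strongly_exposes (f : X -> R) (A : set X) (a : X) : Prop :=
  [/\ (exists x, f x != 0), A a,
      ereal_sup [set (f x)%:E | x in A] = (f a)%:E
    & forall u : nat -> X, (forall n, A (u n)) ->
        (fun n => f (u n)) @ \oo --> f a -> u @ \oo --> a].

End Defs.

(* Let e' = e + v, a point of B.  Since |v| = dist(A, B), e' is a nearest point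
   of B to e and e a nearest point of A to e'.  In a Hilbert space the
   parallelogram law makes near-nearest points of a convex set close to the
   nearest one, and Attouch-Wets closeness transfers this to the perturbed sets.
   Compare one perturbed step x -> y = P_B' x -> x' = P_A' y with near-projections
   p of e onto B' and q of p onto A': firm nonexpansiveness gives
   |x' - q|^2 <= |x - e|^2 - |(y - p) - (x' - q)|^2 up to small errors.  Since
   x* strongly exposes A at e, x* drops with a fixed slope along x' - q as soon
   as |x' - q| >= eps, while it can hardly drop along y - p because x* is
   minimal over B at e'.  So |(y - p) - (x' - q)| is at least a fixed fraction
   of |x' - q| and |x' - e| contracts by a factor lam < 1 up to O(eps);
   iterating, a_n -> e and b_n -> e'. *)

From HB Require Import structures.
From mathcomp Require Import all_boot all_order all_algebra.
From mathcomp Require Import all_classical all_reals all_analysis.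
From mathcomp Require Import ring lra.
Import Order.TTheory GRing.Theory Num.Theory.
Import numFieldNormedType.Exports.
Local Open Scope classical_set_scope.
Local Open Scope ring_scope.

Section InnerProduct.
Context {R : realType} {X : normedModType R} {ip : X -> X -> R}.
Hypothesis hip : is_inner_product ip.

Lemma ipC x y : ip x y = ip y x.
Proof. by case: hip. Qed.

Lemma ip_normE x : `|x| ^+ 2 = ip x x.
Proof. by case: hip. Qed.

Lemma ipZDl a x y z : ip (a *: x + y) z = a * ip x z + ip y z.
Proof. by case: hip. Qed.

Lemma ip0l z : ip 0 z = 0.
Proof. by have := ipZDl 1 0 0 z; rewrite scale1r addr0 mul1r; lra. Qed.

Lemma ipDl x y z : ip (x + y) z = ip x z + ip y z.
Proof. by rewrite -[x]scale1r ipZDl mul1r scale1r. Qed.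

Lemma ipZl a x z : ip (a *: x) z = a * ip x z.
Proof. by rewrite -[a *: x]addr0 ipZDl ip0l addr0. Qed.

Lemma ipNl x z : ip (- x) z = - ip x z.
Proof. by rewrite -scaleN1r ipZl mulN1r. Qed.

Lemma ipBl x y z : ip (x - y) z = ip x z - ip y z.
Proof. by rewrite ipDl ipNl. Qed.

Lemma ipDr x y z : ip z (x + y) = ip z x + ip z y.
Proof. by rewrite ipC ipDl !(ipC _ z). Qed.

Lemma ipNr x z : ip z (- x) = - ip z x.
Proof. by rewrite ipC ipNl ipC. Qed.

Lemma ipBr x y z : ip z (x - y) = ip z x - ip z y.
Proof. by rewrite ipDr ipNr. Qed.

Lemma ipZr a x z : ip z (a *: x) = a * ip z x.
Proof. by rewrite ipC ipZl ipC. Qed.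

Lemma ip_le_normM x y : ip x y <= `|x| * `|y|.
Proof.
have : `|x + y| ^+ 2 <= (`|x| + `|y|) ^+ 2.
  by rewrite lerXn2r ?nnegrE ?addr_ge0 ?ler_normD.
rewrite !ip_normE ipDl !ipDr (ipC y x) sqrrD -!ip_normE.
by have := normr_ge0 x; have := normr_ge0 y; nra.
Qed.

End InnerProduct.

Ltac ip_expand hip := rewrite ?(ipBl hip, ipDl hip, ipZl hip, ipNl hip,
                                ipBr hip, ipDr hip, ipZr hip, ipNr hip).

Section LinearFunctional.
Context {R : realType} {X : normedModType R} {f : X -> R}.
Hypothesis hf : linear_functional f.

Lemma functional0 : f 0 = 0.
Proof. by have := hf 1 0 0; rewrite scale1r addr0 mul1r; lra. Qed.

Lemma functionalD x y : f (x + y) = f x + f y.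
Proof. by rewrite -[x]scale1r hf mul1r scale1r. Qed.

Lemma functionalZ a x : f (a *: x) = a * f x.
Proof. by rewrite -[a *: x]addr0 hf functional0 addr0. Qed.

Lemma functionalB x y : f (x - y) = f x - f y.
Proof. by rewrite -scaleN1r functionalD functionalZ mulN1r. Qed.

Lemma functional_le_dual_norm : continuous f ->
  forall x, `|f x| <= dual_norm f * `|x|.
Proof.
move=> cf.
have : f x @[x --> (0 : X)] --> f 0 := cf 0.
rewrite functional0 => /cvgr0_norm_lt/(_ 1 ltr01)/nbhs_norm0P [d /= d0 near0].
have bounded : has_ubound [set `|f x| | x in [set x : X | `|x| <= 1]].
  exists (2 / d) => _ [y /= y1 <-].
  have : `|(d / 2) *: y| < d.
    rewrite normrZ gtr0_norm ?divr_gt0 //.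
    by have := normr_ge0 y; nra.
  move=> /near0; rewrite functionalZ normrM gtr0_norm ?divr_gt0 // => h.
  by rewrite ler_pdivlMr //; nra.
move=> x; have [->|x0] := eqVneq x 0; first by rewrite functional0 !normr0 mulr0.
have nx : 0 < `|x| by rewrite normr_gt0.
have : `|f (`|x|^-1 *: x)| <= dual_norm f.
  apply: ub_le_sup bounded _ _; exists (`|x|^-1 *: x) => //=.
  by rewrite normrZ normfV normr_id mulVf ?gt_eqF.
by rewrite functionalZ normrM normfV normr_id ler_pdivrMl // mulrC.
Qed.

End LinearFunctional.

Section Convexity.
Context {R : realType} {X : normedModType R}.

Definition is_convex (C : set X) : Prop := convex_set (C : set (convex_lmodType X)).

Lemma convex_comb_mem {C : set X} {x y t} : is_convex C -> C x -> C y ->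
  0 <= t -> t <= 1 -> C (t *: x + (1 - t) *: y).
Proof. by move=> hC hx hy t0 t1; have := hC x y (Itv01 t0 t1); rewrite !inE; apply. Qed.

Lemma convex_combB (x y : X) t : t *: x + (1 - t) *: y - y = t *: (x - y).
Proof. by rewrite scalerBr scalerBl scale1r addrCA (addrC y) addrK. Qed.

End Convexity.

Section Distance.
Context {R : realType} {X : normedModType R}.

Lemma dist_le {D : set X} x {d} : D d -> dist x D <= `|x - d|.
Proof.
move=> hd; apply: ge_inf; last by exists d.
by exists 0 => _ [s _ <-]; rewrite normr_ge0.
Qed.

Lemma dist_ge0 {D : set X} x : D !=set0 -> 0 <= dist x D.
Proof.
move=> [d hd]; apply: lb_le_inf; first by exists `|x - d|, d.
by move=> _ [s _ <-]; rewrite normr_ge0.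
Qed.

Lemma dist_attained {D : set X} {x d} : D d ->
  (forall c, D c -> `|x - d| <= `|x - c|) -> dist x D = `|x - d|.
Proof.
move=> hd dmin; apply/le_anti/andP; split; first exact: dist_le.
by apply: lb_le_inf; [exists `|x - d|, d | move=> _ [c hc <-]; apply: dmin].
Qed.

Lemma dist_lt {D : set X} {x th} : D !=set0 -> dist x D < th ->
  exists2 d, D d & `|x - d| < th.
Proof.
move=> [d0 hd0] /inf_lt; case; first by exists `|x - d0|, d0.
by move=> _ [d hd <-] lt_th; exists d.
Qed.

Lemma dist_le_excess {C D : set X} {N x} : D !=set0 -> C x -> `|x| <= N%:R ->
  dist x D <= excess N C D.
Proof.
move=> [d0 hd0] hx xN; apply: ub_le_sup; last by exists x.
exists (N%:R + `|d0|) => _ [c [_ /= cN] <-].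
apply: le_trans (dist_le c hd0) _; apply: le_trans (ler_normB _ _) _.
by rewrite lerD2r.
Qed.

Definition ball_approx (C D : set X) (N : nat) (th : R) : Prop :=
  forall w, C w -> `|w| <= N%:R -> exists2 d, D d & `|w - d| <= th.

Lemma ball_approx_le {C D : set X} {N th th'} : th <= th' ->
  ball_approx C D N th -> ball_approx C D N th'.
Proof.
by move=> le_th h w hw wN; have [d hd wd] := h w hw wN; exists d => //; apply: le_trans le_th.
Qed.

Lemma hN_ball_approx {C D : set X} {N th} : C !=set0 -> D !=set0 -> hN N C D < th ->
  ball_approx C D N th /\ ball_approx D C N th.
Proof.
move=> hC hD lt_th.
have le1 : excess N C D <= hN N C D by rewrite /hN le_max lexx.
have le2 : excess N D C <= hN N C D by rewrite /hN le_max lexx orbT.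
split=> w hw wN.
- have := le_lt_trans (dist_le_excess hD hw wN) (le_lt_trans le1 lt_th).
  by case/(dist_lt hD) => d hd /ltW; exists d.
- have := le_lt_trans (dist_le_excess hC hw wN) (le_lt_trans le2 lt_th).
  by case/(dist_lt hC) => d hd /ltW; exists d.
Qed.

Lemma AW_cvg_ball_approx {Cs : nat -> set X} {C} : AW_cvg Cs C ->
  (forall n, Cs n !=set0) -> C !=set0 -> forall N th, 0 < th ->
  exists n0, forall n, (n0 <= n)%N ->
    ball_approx (Cs n) C N th /\ ball_approx C (Cs n) N th.
Proof.
move=> hAW hne hC N th th0.
have /cvgrPdist_lt/(_ th th0) [n0 _ hn0] := hAW N.
exists n0 => n /hn0 /=; rewrite sub0r normrN => lt_th.
exact: hN_ball_approx (hne n) hC (le_lt_trans (ler_norm _) lt_th).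
Qed.

End Distance.

Section StrongExposure.
Context {R : realType} {X : normedModType R} {f : X -> R}.

Lemma le_ereal_sup_value {A : set X} {e a} :
  ereal_sup [set (f x)%:E | x in A] = (f e)%:E -> A a -> f a <= f e.
Proof. by move=> hs ha; rewrite -lee_fin -hs; apply: ereal_sup_ubound; exists a. Qed.

Lemma strongly_exposes_gap {A : set X} {e} {eps : R} : strongly_exposes f A e -> 0 < eps ->
  exists2 eta : R, 0 < eta & forall a, A a -> eps <= `|a - e| -> f a <= f e - eta.
Proof.
move=> [_ hAe hsup hseq] eps0; apply: contrapT => no_gap.
have bad n : exists a, [/\ A a, eps <= `|a - e| & f e - n.+1%:R^-1 < f a].
  apply: contrapT => hn; apply: no_gap; exists n.+1%:R^-1; first by rewrite invr_gt0.
  by move=> a ha ea; rewrite leNgt; apply/negP => lt_fa; apply: hn; exists a.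
have [u hu] := choice bad.
have uA n : A (u n) by case: (hu n).
have fu_e : (fun n => f (u n)) @ \oo --> f e.
  apply/cvgrPdist_le => r r0 /=.
  near=> n; have [_ _ lt_fu] := hu n.
  rewrite ger0_norm; last by rewrite subr_ge0 (le_ereal_sup_value hsup (uA n)).
  suff : n.+1%:R^-1 <= r by move: lt_fu; rewrite ltrBlDr -ltrBlDl => /ltW /le_trans; apply.
  rewrite invf_ple ?posrE ?ltr0n //.
  apply: (@le_trans _ _ n%:R); last by rewrite ler_nat.
  by near: n; apply: nbhs_infty_ger.
have /cvgrPdist_lt/(_ eps eps0) [n0 _ hn0] := hseq u uA fu_e.
have [_ eps_le _] := hu n0.
by have := hn0 n0 (leqnn _); rewrite /= distrC => /(le_lt_trans eps_le); rewrite ltxx.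
Unshelve. all: by end_near.
Qed.

End StrongExposure.

Section SmallNumbers.
Context {R : realType}.

Lemma exists_pos_below {a b : R} : 0 < a -> 0 < b ->
  exists c : R, [/\ 0 < c, c <= a & c <= b].
Proof.
move=> a0 b0; exists (Num.min a b).
by split; rewrite ?lt_min ?a0 ?b0 // ge_min lexx ?orbT.
Qed.

Lemma small_quadratic_le {d T : R} : 0 <= d -> 0 < T ->
  exists2 r0 : R, 0 < r0 & forall r : R, 0 <= r -> r <= r0 -> 2 * d * r + r ^+ 2 <= T.
Proof.
move=> d0 T0.
have T' : 0 < T / (2 * d + 1) by rewrite divr_gt0 //; lra.
have [r0 [r00 r01 r0T]] := exists_pos_below ltr01 T'.
exists r0 => // r r_ge0 r_le.
move: r0T; rewrite ler_pdivlMr; last by lra.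
by nra.
Qed.

End SmallNumbers.

Section NearestPoints.
Context {R : realType} {X : normedModType R} {ip : X -> X -> R}.
Hypothesis hip : is_inner_product ip.

Lemma near_min_variational {C : set X} {x p c} {s : R} : is_convex C -> C p -> 0 < s ->
  (forall c, C c -> `|x - p| ^+ 2 <= `|x - c| ^+ 2 + s ^+ 2) ->
  C c -> ip (x - p) (c - p) <= s * `|c - p| + s ^+ 2.
Proof.
move=> hC hp s0 near_min hc.
have along_segment (t : R) : 0 < t -> t <= 1 ->
    2 * t * ip (x - p) (c - p) <= t ^+ 2 * `|c - p| ^+ 2 + s ^+ 2.
  move=> t0 t1; have := near_min _ (convex_comb_mem hC hc hp (ltW t0) t1).
  rewrite !(ip_normE hip); ip_expand hip.
  by rewrite (ipC hip c x) (ipC hip p x) (ipC hip p c); nra.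
set k := ip (x - p) (c - p) in along_segment *; set m := `|c - p| in along_segment *.
have m0 : 0 <= m by rewrite normr_ge0.
have [sm|ms] := lerP s m; last first.
  have := along_segment 1 ltr01 (lexx _); rewrite expr1n mul1r mulr1.
  by nra.
(* the step [t = s / m] balances the two error terms *)
have mp : 0 < m by lra.
have sm1 : s / m <= 1 by rewrite ler_pdivrMr // mul1r.
have := along_segment (s / m) (divr_gt0 s0 mp) sm1.
have -> : (s / m) ^+ 2 * m ^+ 2 = s ^+ 2 by field; rewrite gt_eqF.
rewrite -(ler_pM2r mp).
have -> : 2 * (s / m) * k * m = 2 * s * k by field; rewrite gt_eqF.
by have := sqr_ge0 s; nra.
Qed.

Lemma proj_variational {C : set X} {x p c} : is_convex C -> is_proj C x p ->
  C c -> ip (x - p) (c - p) <= 0.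
Proof.
move=> hC [hp hmin] hc.
set k := ip (x - p) (c - p); set m := `|c - p|.
rewrite leNgt; apply/negP => k0.
have m0 : 0 <= m by rewrite normr_ge0.
have k' : 0 < k / (2 * (m + 1)) by rewrite divr_gt0 //; lra.
have [s [s0 s1 s_le]] := exists_pos_below ltr01 k'.
have near_min c' : C c' -> `|x - p| ^+ 2 <= `|x - c'| ^+ 2 + s ^+ 2.
  move=> hc'; have := hmin _ hc'.
  by have := normr_ge0 (x - p); have := sqr_ge0 s; nra.
have := near_min_variational hC hp s0 near_min hc; rewrite -/k -/m.
move: s_le; rewrite ler_pdivlMr; last by lra.
by nra.
Qed.

Definition near_proj (C : set X) (x p : X) (t : R) : Prop :=
  C p /\ `|x - p| <= dist x C + t.

Lemma near_proj_exists {C : set X} x {t : R} : C !=set0 -> 0 < t ->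
  exists p, near_proj C x p t.
Proof.
move=> hC t0; have : dist x C < dist x C + t by rewrite ltrDl.
by case/(dist_lt hC) => p hp /ltW; exists p.
Qed.

Lemma exists_near_proj_tol {C : set X} x {s tmax : R} : C !=set0 -> 0 < s -> 0 < tmax ->
  exists p t, [/\ near_proj C x p t, 0 <= t, t <= tmax
                 & 2 * dist x C * t + t ^+ 2 <= s ^+ 2].
Proof.
move=> hC s0 tmax0.
have [r0 r00 small] := small_quadratic_le (dist_ge0 x hC) (exprn_gt0 2 s0).
have [t [t0 t_max t_r0]] := exists_pos_below tmax0 r00.
have [p hp] := near_proj_exists x hC t0.
exists p, t; split => //; first exact: ltW.
by apply: small => //; apply: ltW.
Qed.

Lemma near_proj_le {C : set X} {x p t c} : near_proj C x p t -> C c ->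
  `|x - p| <= `|x - c| + t.
Proof. by move=> [_ hx] hc; apply: le_trans hx _; rewrite lerD2r dist_le. Qed.

Lemma near_proj_variational {C : set X} {x p c} {t s : R} : is_convex C ->
  near_proj C x p t -> 0 <= t -> 0 < s -> 2 * dist x C * t + t ^+ 2 <= s ^+ 2 ->
  C c -> ip (x - p) (c - p) <= s * `|c - p| + s ^+ 2.
Proof.
move=> hC [hp hx] t0 s0 hs; apply: near_min_variational => // c' hc'.
have d0 : 0 <= dist x C by apply: dist_ge0; exists p.
have : `|x - p| ^+ 2 <= (dist x C + t) ^+ 2 by rewrite lerXn2r ?nnegrE ?addr_ge0.
have : dist x C ^+ 2 <= `|x - c'| ^+ 2 by rewrite lerXn2r ?nnegrE ?dist_le.
by rewrite sqrrD; lra.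
Qed.

(* The hypotheses are the variational inequalities of [b = P_C a] and of [p]
   being nearly [P_C e]: firm nonexpansiveness up to an error [s]. *)
Lemma firmly_nonexpansive_approx {a b e p : X} {s : R} : 0 <= s ->
  ip (a - b) (p - b) <= 0 -> ip (e - p) (b - p) <= s * `|b - p| + s ^+ 2 ->
  `|b - p| ^+ 2 <= `|a - e| ^+ 2 - `|(a - e) - (b - p)| ^+ 2
                   + 2 * s * `|b - p| + 2 * s ^+ 2
  /\ `|b - p| <= `|a - e| + 2 * s.
Proof.
move=> s0 vi_b vi_p.
have cs := ip_le_normM hip (a - e) (b - p).
have := normr_ge0 (b - p); have := normr_ge0 (a - e).
have key : `|b - p| ^+ 2 <= ip (a - e) (b - p) + s * `|b - p| + s ^+ 2.
  move: vi_b vi_p; rewrite !(ip_normE hip); ip_expand hip.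
  rewrite ?(ipC hip b a) ?(ipC hip e a) ?(ipC hip p a) ?(ipC hip e b).
  by rewrite ?(ipC hip p b) ?(ipC hip p e); lra.
split; last by nra.
move: key; rewrite !(ip_normE hip); ip_expand hip.
rewrite ?(ipC hip b a) ?(ipC hip e a) ?(ipC hip p a) ?(ipC hip e b).
by rewrite ?(ipC hip p b) ?(ipC hip p e); lra.
Qed.

(* Parallelogram law at the midpoint of [w0] and [w1]. *)
Lemma near_minimizers_close {C : set X} {z w0 w1} {d r : R} : is_convex C ->
  C w0 -> C w1 -> (forall c, C c -> d <= `|z - c|) -> 0 <= d -> 0 <= r ->
  `|z - w0| <= d + r -> `|z - w1| <= d + r ->
  `|w0 - w1| ^+ 2 <= 4 * (2 * d * r + r ^+ 2).
Proof.
move=> hC h0 h1 hd d0 r0 n0 n1.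
have half0 : 0 <= (2 : R)^-1 by rewrite invr_ge0.
have half1 : (2 : R)^-1 <= 1 by rewrite invf_le1 // ler1n.
have := hd _ (convex_comb_mem hC h0 h1 half0 half1).
have half : 1 - (2 : R)^-1 = 2^-1 by field.
rewrite half => hmid.
have : `|z - w0| ^+ 2 <= (d + r) ^+ 2 by rewrite lerXn2r ?nnegrE ?addr_ge0.
have : `|z - w1| ^+ 2 <= (d + r) ^+ 2 by rewrite lerXn2r ?nnegrE ?addr_ge0.
have : d ^+ 2 <= `|z - (2^-1 *: w0 + 2^-1 *: w1)| ^+ 2 by rewrite lerXn2r ?nnegrE.
rewrite !(ip_normE hip); ip_expand hip.
rewrite ?(ipC hip w0 z) ?(ipC hip w1 z) ?(ipC hip w1 w0) sqrrD.
have : (2 : R)^-1 * 2 = 1 by rewrite mulVf.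
by nra.
Qed.

(* [w] is a nearest point of [C] to [z]; move [q] back to [C] and compare
   it with [w] by [near_minimizers_close]. *)
Lemma near_proj_anchor {C Cn : set X} {z z' w q} {d : R} {N} {de t rho T : R} :
  is_convex C -> C w -> (forall c, C c -> d <= `|z - c|) -> `|z - w| <= d ->
  0 <= d -> ball_approx C Cn N de -> ball_approx Cn C N de -> `|w| <= N%:R ->
  `|z| + d + 2 * rho + de + t <= N%:R -> `|z' - z| <= rho ->
  near_proj Cn z' q t -> 0 <= de -> 0 <= t -> 0 <= rho -> 0 <= T ->
  4 * (2 * d * (2 * rho + 2 * de + t) + (2 * rho + 2 * de + t) ^+ 2) <= T ^+ 2 ->
  `|q - w| <= de + T.
Proof.
move=> hC hw hd zw d0 CCn CnC wN zN z'z hq de0 t0 rho0 T0 hT.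
have [w' hw' ww'] := CCn w hw wN.
have := near_proj_le hq hw'; have := ler_distD z z' w'; have := ler_distD w z w'.
have := ler_distD z' z q; rewrite (distrC z z') => zq zw' z'w' q_near.
have qN : `|q| <= N%:R by have := lerB_dist q z; rewrite (distrC q z); lra.
have [qt hqt qqt] := CnC q hq.1 qN.
have zqt := ler_distD q z qt.
have r0 : 0 <= 2 * rho + 2 * de + t by lra.
have zqt_r : `|z - qt| <= d + (2 * rho + 2 * de + t) by lra.
have zw_r : `|z - w| <= d + (2 * rho + 2 * de + t) by lra.
have sq := near_minimizers_close hC hqt hw hd d0 r0 zqt_r zw_r.
have : `|qt - w| <= T.
  rewrite -(ler_pXn2r (_ : 0 < 2)%N) ?nnegrE //.
  exact: le_trans sq hT.
by have := ler_distD qt q w; lra.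
Qed.

End NearestPoints.

Section Slopes.
Context {R : realType} {X : normedModType R} {f : X -> R}.
Hypothesis hf : linear_functional f.
Hypothesis f_le_norm : forall x, `|f x| <= `|x|.

Lemma functional_lipschitz x y : f x - f y <= `|x - y|.
Proof. by rewrite -(functionalB hf); apply: le_trans (ler_norm _) (f_le_norm _). Qed.

(* The point of the segment [[q, a']] at distance [eps] from [q] is near a
   point of [A] at distance [>= eps / 2] from [e], where [f] is [eta] below
   [f e]; convexity turns this drop into a slope. *)
Lemma approx_exposed_slope {A A' : set X} {e q a'} {N} {om eps eta : R} :
  is_convex A' -> A' q -> `|q - e| <= om -> ball_approx A' A N om ->
  (forall a, A a -> eps / 2 <= `|a - e| -> f a <= f e - eta) ->
  0 < eps -> 0 <= om -> 6 * om <= eps -> 6 * om <= eta -> `|e| + eps + om <= N%:R ->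
  A' a' -> eps <= `|a' - q| -> f a' - f q <= - (eta / (2 * eps)) * `|a' - q|.
Proof.
move=> hA' hq qe A'A gap eps0 om0 om_eps om_eta eN ha' far.
set L := `|a' - q| in far *.
have L0 : 0 < L by lra.
set t := eps / L.
have t0 : 0 <= t by rewrite divr_ge0 ?ltW.
have t1 : t <= 1 by rewrite ler_pdivrMr // mul1r.
set w := t *: a' + (1 - t) *: q.
have hw : A' w by apply: convex_comb_mem.
have ewq : w - q = t *: (a' - q) by rewrite convex_combB.
have wq : `|w - q| = eps by rewrite ewq normrZ ger0_norm // divfK // gt_eqF.
have fwq : f w - f q = t * (f a' - f q) by rewrite -!(functionalB hf) ewq (functionalZ hf).
have := ler_distD e w q; have := ler_distD q w e; rewrite (distrC e q) => we wq'.
have wN : `|w| <= N%:R by have := lerB_dist w e; lra.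
have [a hA wa] := A'A w hw wN.
have := ler_distD a w e => wae.
have ae : eps / 2 <= `|a - e| by lra.
have fa := gap _ hA ae.
have := functional_lipschitz w a; have := functional_lipschitz e q.
rewrite (distrC e q) => lip_e lip_w.
have key : t * (f a' - f q) <= - (eta / 2) by rewrite -fwq; lra.
rewrite -(ler_pM2l (divr_gt0 eps0 L0)) -/t.
have -> : t * (- (eta / (2 * eps)) * L) = - (eta / 2) by rewrite /t; field; rewrite !gt_eqF.
exact: key.
Qed.

Lemma approx_min_slope {B B' : set X} {z p b} {N} {om : R} :
  is_convex B' -> B' p -> `|p - z| <= om -> ball_approx B' B N om ->
  (forall b, B b -> f z <= f b) -> 0 <= om -> `|z| + om + 1 <= N%:R ->
  B' b -> - (3 * om) * (1 + `|b - p|) <= f b - f p.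
Proof.
move=> hB' hp pz B'B fmin om0 zN hb.
have near1 w : B' w -> `|w - p| <= 1 -> f p - 2 * om <= f w.
  move=> hw wp1.
  have wN : `|w| <= N%:R.
    by have := lerB_dist w z; have := ler_distD p w z; lra.
  have [b' hb' wb'] := B'B w hw wN.
  have := fmin _ hb'; have := functional_lipschitz b' w.
  by rewrite distrC; have := functional_lipschitz p z; lra.
set L := `|b - p|.
have L0 : 0 <= L by rewrite normr_ge0.
have [L1|L1] := lerP L 1; first by have := near1 b hb L1; nra.
set t := L^-1.
have t0 : 0 <= t by rewrite invr_ge0.
have t1 : t <= 1 by rewrite invf_le1 ?ltW //; lra.
set w := t *: b + (1 - t) *: p.
have ewp : w - p = t *: (b - p) by rewrite convex_combB.
have wp : `|w - p| = 1 by rewrite ewp normrZ ger0_norm // mulVf // gt_eqF //; lra.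
have fwp : f w - f p = t * (f b - f p) by rewrite -!(functionalB hf) ewp (functionalZ hf).
have wp1 : `|w - p| <= 1 by rewrite wp.
have := near1 w (convex_comb_mem hB' hb hp t0 t1) wp1.
rewrite -[f w](subrK (f p)) fwp => key.
have : - (2 * om) * L <= f b - f p.
  have -> : f b - f p = t * (f b - f p) * L by rewrite /t mulrAC mulVf ?mul1r // gt_eqF; lra.
  by rewrite ler_pM2r; lra.
by nra.
Qed.

End Slopes.

Section ContractionArithmetic.
Context {R : realType}.

(* [1 / (1 + ka^2 / 4) <= contraction_factor ka ^ 2]; averaging with [1]
   avoids square roots. *)
Definition contraction_factor (ka : R) : R := (1 + (1 + ka ^+ 2 / 4)^-1) / 2.

Lemma contraction_factor_gt_half ka : 1 / 2 < contraction_factor ka.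
Proof.
have : 0 < (1 + ka ^+ 2 / 4)^-1 by rewrite invr_gt0; have := sqr_ge0 ka; lra.
by rewrite /contraction_factor; lra.
Qed.

Lemma contraction_factor_lt1 {ka} : 0 < ka -> contraction_factor ka < 1.
Proof.
move=> ka0; have k0 : 0 < ka ^+ 2 / 4 by rewrite divr_gt0 ?exprn_gt0.
have : (1 + ka ^+ 2 / 4)^-1 < 1 by rewrite invf_lt1; lra.
by rewrite /contraction_factor; lra.
Qed.

Lemma contraction_of_gap {D Z G s0 ka : R} : 0 < ka -> 0 <= D -> 0 <= s0 ->
  0 <= Z -> Z ^+ 2 <= D ^+ 2 - G ^+ 2 + s0 ^+ 2 -> ka * Z / 2 <= G ->
  Z <= contraction_factor ka * D + s0.
Proof.
move=> ka0 D0 s00 Z0 sq gap.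
have kG : ka ^+ 2 / 4 * Z ^+ 2 <= G ^+ 2.
  have kaZ0 : 0 <= ka * Z / 2 by rewrite divr_ge0 // mulr_ge0 // ltW.
  have sqE : ka ^+ 2 / 4 * Z ^+ 2 = (ka * Z / 2) ^+ 2 by field.
  by rewrite sqE lerXn2r ?nnegrE //; apply: le_trans gap.
set k := ka ^+ 2 / 4 in kG; set m := (1 + k)^-1.
have k0 : 0 < k by rewrite divr_gt0 ?exprn_gt0.
have m0 : 0 < m by rewrite invr_gt0; lra.
have mk : m * (1 + k) = 1 by rewrite mulVf // gt_eqF //; lra.
have Z2 : Z ^+ 2 <= m * D ^+ 2 + s0 ^+ 2.
  have : m * ((1 + k) * Z ^+ 2) <= m * (D ^+ 2 + s0 ^+ 2) by rewrite ler_pM2l //; lra.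
  rewrite mulrA mk mul1r; have := sqr_ge0 s0; have : m * k >= 0 by rewrite mulr_ge0 ?ltW.
  by nra.
have lam_sq : m <= contraction_factor ka ^+ 2.
  by rewrite /contraction_factor -/k -/m; have := sqr_ge0 (1 - m); nra.
have lam0 := contraction_factor_gt_half ka.
rewrite leNgt; apply/negP => lt_Z.
have lam_ge0 : 0 <= contraction_factor ka by lra.
have lhs0 : 0 <= contraction_factor ka * D + s0 by rewrite addr_ge0 // mulr_ge0.
have : (contraction_factor ka * D + s0) ^+ 2 < Z ^+ 2 by rewrite ltrXn2r ?nnegrE.
have : m * D ^+ 2 <= contraction_factor ka ^+ 2 * D ^+ 2 by rewrite ler_wpM2r ?sqr_ge0.
have : 0 <= contraction_factor ka * D * s0 by do 2?apply: mulr_ge0.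
by rewrite sqrrD; lra.
Qed.

Lemma two_steps_sqr_le {D Y Z V G s s0 : R} : 0 <= s -> s <= 1 -> 0 <= D ->
  Y ^+ 2 <= D ^+ 2 - V ^+ 2 + 2 * s * Y + 2 * s ^+ 2 -> Y <= D + 2 * s ->
  Z ^+ 2 <= Y ^+ 2 - G ^+ 2 + 2 * s * Z + 2 * s ^+ 2 -> Z <= Y + 2 * s ->
  s * (4 * D + 16) <= s0 ^+ 2 -> Z ^+ 2 <= D ^+ 2 - G ^+ 2 + s0 ^+ 2.
Proof.
move=> s0' s1 D0 Y2 Y1 Z2 Z1 small.
have : 2 * s * Y + 2 * s * Z + 4 * s ^+ 2 <= s0 ^+ 2 by nra.
by have := sqr_ge0 V; lra.
Qed.

End ContractionArithmetic.

(* The [2 * 0] is [rho = 0] in [near_proj_anchor]. *)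
Lemma anchor_tolerances {R : realType} {d om : R} : 0 <= d -> 0 < om ->
  exists de wp : R, [/\ 0 < de, de <= wp / 2, wp <= om
    & forall t : R, 0 <= t -> t <= de ->
        4 * (2 * d * (2 * 0 + 2 * de + t) + (2 * 0 + 2 * de + t) ^+ 2) <= (wp / 2) ^+ 2
     /\ 4 * (2 * d * (2 * wp + 2 * de + t) + (2 * wp + 2 * de + t) ^+ 2) <= (om / 2) ^+ 2].
Proof.
move=> d0 om0.
have T1 : 0 < (om / 2) ^+ 2 / 4 by rewrite divr_gt0 // exprn_gt0 // divr_gt0.
have [r1 r10 small1] := small_quadratic_le d0 T1.
have [wp [wp0 wp_om wp_r1]] := exists_pos_below om0 (divr_gt0 r10 (ltr0n _ 4)).
have T2 : 0 < (wp / 2) ^+ 2 / 4 by rewrite divr_gt0 // exprn_gt0 // divr_gt0.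
have [r2 r20 small2] := small_quadratic_le d0 T2.
have [de [de0 de_wp de_r2]] :=
  exists_pos_below (divr_gt0 wp0 (ltr0n _ 2)) (divr_gt0 r20 (ltr0n _ 3)).
exists de, wp; split => // t t0 t_de; split.
- have r0 : 0 <= 2 * 0 + 2 * de + t by lra.
  have r_le : 2 * 0 + 2 * de + t <= r2 by lra.
  by have := small2 _ r0 r_le; lra.
- have r0 : 0 <= 2 * wp + 2 * de + t by lra.
  have r_le : 2 * wp + 2 * de + t <= r1 by lra.
  by have := small1 _ r0 r_le; lra.
Qed.

Section AlternatingStep.
Context {R : realType} {X : normedModType R} {ip : X -> X -> R} {f : X -> R}.
Hypotheses (hip : is_inner_product ip) (hf : linear_functional f).
Hypothesis f_le_norm : forall x, `|f x| <= `|x|.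
Context {A B : set X} {v e : X}.
Hypotheses (hA : is_convex A) (hB : is_convex B) (Ae : A e) (Bev : B (e + v)).
Hypothesis f_min_B : forall b, B b -> f (e + v) <= f b.
Hypothesis v_le_dist : forall a b, A a -> B b -> `|v| <= `|b - a|.
Context {eps eta : R}.
Hypotheses (eps0 : 0 < eps) (eps1 : eps <= 1) (eta0 : 0 < eta) (eta_eps : eta <= eps).
Hypothesis gap : forall a, A a -> eps / 2 <= `|a - e| -> f a <= f e - eta.

Let ka := eta / (2 * eps).
Let lam := contraction_factor ka.
Let om := (1 - lam) * eps * ka / 38.

Let ka0 : 0 < ka. Proof. by rewrite divr_gt0 // mulr_gt0. Qed.
Let ka_le : ka <= 1 / 2.
Proof. by have := eta_eps; rewrite ler_pdivrMr ?mulr_gt0 //; lra. Qed.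
Let lam_gt : 1 / 2 < lam. Proof. exact: contraction_factor_gt_half. Qed.
Let lam_lt1 : lam < 1. Proof. exact: contraction_factor_lt1. Qed.
Let lam_eps0 : 0 < (1 - lam) * eps. Proof. by rewrite mulr_gt0 // subr_gt0. Qed.
Let om0 : 0 < om. Proof. by rewrite divr_gt0 // mulr_gt0. Qed.
Let lam_eps1 : (1 - lam) * eps <= 1 / 2.
Proof. by have := eps0; have := eps1; have := lam_gt; nra. Qed.
Let om_ka : 12 * om <= ka.
Proof. by have := lam_eps1; have := ka0; rewrite /om; nra. Qed.
Let om_eta : 6 * om <= eta.
Proof.
have -> : eta = 2 * eps * ka by rewrite /ka mulrC divfK // gt_eqF // mulr_gt0.
have : 0 < eps * ka by rewrite mulr_gt0.
by have := lam_gt; rewrite /om; nra.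
Qed.
Let om_eps : 6 * om <= eps.
Proof.
have : (1 - lam) * ka <= 1 / 4 by have := lam_gt; have := lam_lt1; have := ka_le; have := ka0; nra.
by have := eps0; rewrite /om; nra.
Qed.
Let om_lam : 2 * om <= (1 - lam) * eps.
Proof. by have := lam_eps0; have := ka_le; rewrite /om; nra. Qed.

Let small_gap_le (D Z : R) : 0 <= D -> ka * Z < 6 * om * (3 + D) ->
  Z <= lam * D + (1 - lam) * eps - om.
Proof.
move=> D0 lt_Z; rewrite -(ler_pM2l ka0).
have : 6 * om * D <= ka * lam * D.
  by rewrite ler_wpM2r //; have := om_ka; have := lam_gt; have := ka0; nra.
have : 18 * om + ka * om <= ka * ((1 - lam) * eps).
  by have := lam_eps0; have := ka_le; have := ka0; have := om0; rewrite /om; nra.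
by nra.
Qed.

Let contraction_cases {D Y Z G s : R} : 0 <= D -> 0 <= Z -> 0 < s -> s <= om ->
  Y <= D + 2 * s -> Z ^+ 2 <= D ^+ 2 - G ^+ 2 + ((1 - lam) * eps / 2) ^+ 2 ->
  (eps <= Z -> ka * Z - 3 * om * (1 + Y) <= G) ->
  Z + om <= 2 * eps \/ Z + om <= lam * D + (1 - lam) * eps.
Proof.
move=> D0 Z0 s0 s_om YD sq gapG.
have := eps1; have := om_eps; have := om_lam; have := om0.
have [Zs|Zs] := lerP Z eps; first by left; lra.
right; have {}gapG := gapG (ltW Zs).
have [big|small] := lerP (6 * om * (1 + Y)) (ka * Z).
  have half_gap : ka * Z / 2 <= G by lra.
  have := contraction_of_gap ka0 D0 (ltW (divr_gt0 lam_eps0 (ltr0n _ 2))) Z0 sq half_gap.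
  by rewrite -/lam; lra.
have : 6 * om * (1 + Y) <= 6 * om * (3 + D) by rewrite ler_wpM2l //; lra.
by move=> /(lt_le_trans small) /(small_gap_le _ _ D0); lra.
Qed.

Section Tolerances.
Variables (de wp : R) (N : nat).
Hypotheses (de0 : 0 < de) (de_wp : de <= wp / 2) (wp_om : wp <= om).
Hypothesis de_anchor : forall t : R, 0 <= t -> t <= de ->
    4 * (2 * `|v| * (2 * 0 + 2 * de + t) + (2 * 0 + 2 * de + t) ^+ 2) <= (wp / 2) ^+ 2
 /\ 4 * (2 * `|v| * (2 * wp + 2 * de + t) + (2 * wp + 2 * de + t) ^+ 2) <= (om / 2) ^+ 2.
Hypothesis eN : `|e| + 2 * `|v| + 3 <= N%:R.

(* [lra] ignores section hypotheses: [numbers] moves the numeric ones into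
   the goal context. *)
Local Ltac numbers :=
  move: (eps0) (eps1) (eta0) (eta_eps) (ka0) (ka_le) (lam_gt) (lam_lt1) (om0)
        (om_ka) (om_eta) (om_eps) (om_lam) (de0) (de_wp) (wp_om) (eN) (normr_ge0 v)
        (normr_ge0 e) (ler_normD e v) => ? ? ? ? ? ? ? ? ? ? ? ? ? ? ? ? ? ? ? ?.

Variables A' B' : set X.
Hypotheses (hA' : is_convex A') (hB' : is_convex B').
Hypotheses (A'n : A' !=set0) (B'n : B' !=set0).
Hypotheses (A'A : ball_approx A' A N de) (AA' : ball_approx A A' N de).
Hypotheses (B'B : ball_approx B' B N de) (BB' : ball_approx B B' N de).

Lemma near_projB_close {p t} : near_proj B' e p t -> 0 <= t -> t <= de ->
  `|p - (e + v)| <= wp.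
Proof.
move=> hp t0 t_de; numbers.
have e_dist c : B c -> `|v| <= `|e - c| by move=> hc; rewrite distrC v_le_dist.
have ee : `|e - (e + v)| <= `|v| by rewrite opprD addNKr normrN.
have evN : `|e + v| <= N%:R by lra.
have eN' : `|e| + `|v| + 2 * 0 + de + t <= N%:R by lra.
have e0 : `|e - e| <= 0 by rewrite subrr normr0.
have wp2 : 0 <= wp / 2 by lra.
have := near_proj_anchor hip hB Bev e_dist ee (normr_ge0 v) BB' B'B evN eN' e0 hp
  (ltW de0) t0 (lexx 0) wp2 (de_anchor _ t0 t_de).1.
lra.
Qed.

Lemma near_projA_close {p q t} : `|p - (e + v)| <= wp -> near_proj A' p q t -> 0 <= t ->
  t <= de -> `|q - e| <= om.
Proof.
move=> pev hq t0 t_de; numbers.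
have ev_dist c : A c -> `|v| <= `|e + v - c| by move=> hc; exact: v_le_dist hc Bev.
have ee : `|e + v - e| <= `|v| by rewrite addrC addKr.
have eN' : `|e| <= N%:R by lra.
have evN : `|e + v| + `|v| + 2 * wp + de + t <= N%:R by lra.
have wp0 : 0 <= wp by lra.
have om2 : 0 <= om / 2 by lra.
have := near_proj_anchor hip hA Ae ev_dist ee (normr_ge0 v) AA' A'A eN' evN pev hq
  (ltW de0) t0 wp0 om2 (de_anchor _ t0 t_de).2.
lra.
Qed.

Lemma step_contraction x y x' : is_proj B' x y -> is_proj A' y x' ->
  (`|x' - e| <= 2 * eps \/ `|x' - e| <= lam * `|x - e| + (1 - lam) * eps)
  /\ `|y - (e + v)| <= `|x - e| + eps.
Proof.
move=> hy hx'; numbers.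
have D0 : 0 <= `|x - e| := normr_ge0 _.
have s0_pos : 0 < ((1 - lam) * eps / 2) ^+ 2 / (4 * `|x - e| + 16).
  by rewrite divr_gt0 ?exprn_gt0 ?divr_gt0 //; lra.
have [s [s_pos s_om]] := exists_pos_below om0 s0_pos.
rewrite ler_pdivlMr; last by lra.
move=> s_small.
have [p [t [hp t0 t_de t_s]]] := exists_near_proj_tol e B'n s_pos de0.
have pev := near_projB_close hp t0 t_de.
have [q [t' [hq t0' t_de' t_s']]] := exists_near_proj_tol p A'n s_pos de0.
have qe := near_projA_close pev hq t0' t_de'.
have [Y2 Y1] := firmly_nonexpansive_approx hip (ltW s_pos)
  (proj_variational hip hB' hy hp.1) (near_proj_variational hip hB' hp t0 s_pos t_s hy.1).
have [Z2 Z1] := firmly_nonexpansive_approx hip (ltW s_pos)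
  (proj_variational hip hA' hx' hq.1) (near_proj_variational hip hA' hq t0' s_pos t_s' hx'.1).
have s1 : s <= 1 by lra.
have sq := two_steps_sqr_le (ltW s_pos) s1 (normr_ge0 _) Y2 Y1 Z2 Z1 s_small.
have om_de : de <= om by lra.
have gapG : eps <= `|x' - q| ->
    ka * `|x' - q| - 3 * om * (1 + `|y - p|) <= `|y - p - (x' - q)|.
  move=> far.
  have N1 : `|e| + eps + om <= N%:R by lra.
  have N2 : `|e + v| + om + 1 <= N%:R by lra.
  have pev' : `|p - (e + v)| <= om by lra.
  have := approx_exposed_slope hf f_le_norm hA' hq.1 qe (ball_approx_le om_de A'A)
    gap eps0 (ltW om0) om_eps om_eta N1 hx'.1 far.
  have := approx_min_slope hf f_le_norm hB' hp.1 pev' (ball_approx_le om_de B'B)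
    f_min_B (ltW om0) N2 hy.1.
  have := le_trans (ler_norm _) (f_le_norm (y - p - (x' - q))).
  by rewrite !(functionalB hf) -/ka; lra.
have := contraction_cases (normr_ge0 _) (normr_ge0 _) s_pos s_om Y1 sq gapG.
have := ler_distD q x' e; have := ler_distD p y (e + v).
by split; lra.
Qed.

End Tolerances.

Lemma uniform_step_contraction : exists2 de, 0 < de & exists N : nat,
  forall (A' B' : set X) x y x', is_convex A' -> is_convex B' ->
    A' !=set0 -> B' !=set0 ->
    ball_approx A' A N de -> ball_approx A A' N de ->
    ball_approx B' B N de -> ball_approx B B' N de ->
    is_proj B' x y -> is_proj A' y x' ->
    (`|x' - e| <= 2 * eps \/ `|x' - e| <= lam * `|x - e| + (1 - lam) * eps)
    /\ `|y - (e + v)| <= `|x - e| + eps.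
Proof.
have [de [wp [de0 de_wp wp_om de_anchor]]] := anchor_tolerances (normr_ge0 v) om0.
have eN : `|e| + 2 * `|v| + 3 <= (Num.bound (`|e| + 2 * `|v| + 3))%:R.
  by apply/ltW/archi_boundP; rewrite addr_ge0 ?mulr_ge0.
exists de => //; exists (Num.bound (`|e| + 2 * `|v| + 3)) => A' B' x y x' *.
by apply: (step_contraction _ _ _ de0 de_wp wp_om de_anchor eN A' B').
Qed.

End AlternatingStep.

Lemma eventually_le_of_contraction {R : realType} {u : nat -> R} {n1 : nat} {eps lam : R} :
  0 < eps -> 0 <= lam -> lam < 1 -> (forall n, 0 <= u n) ->
  (forall n, (n1 <= n)%N ->
     u n.+1 <= 2 * eps \/ u n.+1 <= lam * u n + (1 - lam) * eps) ->
  exists n2, forall n, (n2 <= n)%N -> u n <= 2 * eps.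
Proof.
move=> eps0 lam0 lam1 u0 step.
set ga := (1 - lam) * eps.
have ga0 : 0 < ga by rewrite mulr_gt0 // subr_gt0.
have stay n : (n1 <= n)%N -> u n <= 2 * eps -> u n.+1 <= 2 * eps.
  move=> hn un; case: (step n hn) => // h.
  have : lam * u n <= lam * (2 * eps) by rewrite ler_wpM2l.
  by rewrite /ga in h; nra.
(* above [2 eps], each step decreases [u] by at least [ga] *)
have descent k : u (n1 + k)%N <= 2 * eps \/ u (n1 + k)%N <= u n1 - k%:R * ga.
  elim: k => [|k IH]; first by right; rewrite addn0 mul0r subr0.
  rewrite addnS; have [le_k|lt_k] := lerP (u (n1 + k)%N) (2 * eps).
    by left; apply: stay; rewrite ?leq_addr.
  case: IH => [le_k|IH]; first by move: lt_k; rewrite ltNge le_k.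
  case: (step _ (leq_addr k n1)) => h; [by left | right].
  have : ga <= (1 - lam) * (u (n1 + k)%N - eps) by rewrite ler_wpM2l ?subr_ge0 ?ltW //; lra.
  by rewrite -natr1 mulrDl mul1r; rewrite /ga in h IH *; nra.
set K := Num.bound (u n1 / ga).
have : u n1 / ga < K%:R by apply: archi_boundP; rewrite divr_ge0 // ltW.
rewrite ltr_pdivrMr // => hK.
have base : u (n1 + K)%N <= 2 * eps by case: (descent K) => // h; lra.
exists (n1 + K)%N => n hn; rewrite -(subnKC hn).
elim: (n - (n1 + K))%N => [|j IH]; first by rewrite addn0.
by rewrite addnS; apply: stay => //; rewrite -addnA leq_addr.
Qed.

Section PerturbedAlternatingProjections.
Context {R : realType} {X : normedModType R} {ip : X -> X -> R} {f : X -> R}.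
Hypotheses (hip : is_inner_product ip) (hf : linear_functional f).
Hypothesis f_le_norm : forall x, `|f x| <= `|x|.
Context {A B : set X} {v e : X}.
Hypotheses (hA : is_convex A) (hB : is_convex B) (A0 : A !=set0) (B0 : B !=set0).
Hypotheses (Ae : A e) (Bev : B (e + v)).
Hypothesis f_min_B : forall b, B b -> f (e + v) <= f b.
Hypothesis v_le_dist : forall a b, A a -> B b -> `|v| <= `|b - a|.
Hypothesis exposed : strongly_exposes f A e.
Context {As Bs : nat -> set X} {a b : nat -> X}.
Hypotheses (hAs : forall n, closed_convex_nonempty (As n))
           (hBs : forall n, closed_convex_nonempty (Bs n)).
Hypotheses (AsA : AW_cvg As A) (BsB : AW_cvg Bs B).
Hypothesis hAP : forall n, is_proj (Bs n.+1) (a n) (b n.+1) /\ is_proj (As n.+1) (b n.+1) (a n.+1).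

Let As_convex n : is_convex (As n). Proof. by case: (hAs n). Qed.
Let Bs_convex n : is_convex (Bs n). Proof. by case: (hBs n). Qed.
Let As0 n : As n !=set0. Proof. by case: (hAs n). Qed.
Let Bs0 n : Bs n !=set0. Proof. by case: (hBs n). Qed.

Lemma perturbed_AP_eventually_near {eps : R} : 0 < eps -> eps <= 1 ->
  exists n0, forall n, (n0 <= n)%N ->
    `|a n - e| <= 2 * eps /\ `|b n.+1 - (e + v)| <= 3 * eps.
Proof.
move=> eps0 eps1.
have [eta' eta'0 gap'] := strongly_exposes_gap exposed (divr_gt0 eps0 (ltr0n _ 2)).
have [eta [eta0 eta_eta' eta_eps]] := exists_pos_below eta'0 eps0.
have gap c : A c -> eps / 2 <= `|c - e| -> f c <= f e - eta.
  by move=> hc ce; have := gap' c hc ce; lra.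
have [de de0 [N step]] := uniform_step_contraction hip hf f_le_norm hA hB Ae Bev
  f_min_B v_le_dist eps0 eps1 eta0 eta_eps gap.
set lam := contraction_factor _ in step.
have lam_gt := contraction_factor_gt_half (eta / (2 * eps)).
have lam_lt1 := contraction_factor_lt1 (divr_gt0 eta0 (mulr_gt0 (ltr0n _ 2) eps0)).
have [nA near_A] := AW_cvg_ball_approx AsA As0 A0 N de de0.
have [nB near_B] := AW_cvg_ball_approx BsB Bs0 B0 N de de0.
have one_step n : (maxn nA nB <= n)%N ->
    (`|a n.+1 - e| <= 2 * eps \/ `|a n.+1 - e| <= lam * `|a n - e| + (1 - lam) * eps)
    /\ `|b n.+1 - (e + v)| <= `|a n - e| + eps.
  rewrite geq_max => /andP[/leqW/near_A[A'A AA'] /leqW/near_B[B'B BB']].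
  exact: step (As_convex _) (Bs_convex _) (As0 _) (Bs0 _) A'A AA' B'B BB'
    (hAP n).1 (hAP n).2.
have lam0 : 0 <= lam by rewrite /lam; lra.
have [n2 an_le] := eventually_le_of_contraction (u := fun n => `|a n - e|) eps0
  lam0 lam_lt1 (fun n => normr_ge0 _) (fun n hn => (one_step n hn).1).
exists (maxn (maxn nA nB) n2) => n; rewrite geq_max => /andP[/one_step[_ bn] /an_le an].
by split => //; lra.
Qed.

Lemma perturbed_AP_cvg : a @ \oo --> e /\ b @ \oo --> e + v.
Proof.
have near_eps r : 0 < r -> exists n0, forall n, (n0 <= n)%N ->
    `|a n - e| < r /\ `|b n.+1 - (e + v)| < r.
  move=> r0; have [c [c0 c1 cr]] := exists_pos_below ltr01 (divr_gt0 r0 (ltr0n _ 4)).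
  have [n0 hn0] := perturbed_AP_eventually_near c0 c1.
  by exists n0 => n /hn0 []; split; lra.
split; apply/cvgrPdist_lt => r /near_eps [n0 hn0].
  by exists n0 => // n /hn0 [+ _]; rewrite distrC.
by exists n0.+1 => // [[|n]] // /hn0 [_]; rewrite distrC.
Qed.

End PerturbedAlternatingProjections.

Section Displacement.
Context {R : realType} {X : normedModType R}.

Lemma displacement_le_dist {A B : set X} {v a b} : displacement A B v ->
  A a -> B b -> `|v| <= `|b - a|.
Proof.
move=> [_ vmin] ha hb; have := vmin (b - a); rewrite !sub0r !normrN.
by apply; apply: subset_closure; exists b => //; exists a.
Qed.

Lemma Eset_Fset_displacement {A B : set X} {v e} :
  (forall a b, A a -> B b -> `|v| <= `|b - a|) -> A e -> B (e + v) ->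
  Eset A B e /\ Fset A B (e + v).
Proof.
move=> v_le Ae Bev.
have ev_e : `|e + v - e| = `|v| by rewrite addrC addKr.
have e_ev : `|e - (e + v)| = `|v| by rewrite distrC ev_e.
have eB : dist e B = `|v|.
  by rewrite -e_ev; apply: dist_attained => // c hc; rewrite e_ev distrC v_le.
have evA : dist (e + v) A = `|v|.
  by rewrite -ev_e; apply: dist_attained => // c hc; rewrite ev_e v_le.
have AB : dist_sets A B = `|v|.
  apply/le_anti/andP; split.
    rewrite -eB; apply: ge_inf; last by exists e.
    by exists 0 => _ [s _ <-]; apply: dist_ge0; exists (e + v).
  apply: lb_le_inf; first by exists (dist e B), e.
  move=> _ [a ha <-]; apply: lb_le_inf; first by exists `|a - (e + v)|, (e + v).
  by move=> _ [b hb <-]; rewrite distrC v_le.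
by rewrite /Eset /Fset /= eB evA AB.
Qed.

Lemma le_of_ereal_inf_shift {B : set X} {f : X -> R} {v e b} : linear_functional f ->
  ereal_inf [set (f (b - v))%:E | b in B] = (f e)%:E -> B b -> f (e + v) <= f b.
Proof.
move=> hf hinf hb.
have : ((f e)%:E <= (f (b - v))%:E)%E by rewrite -hinf; apply: ereal_inf_lbound; exists b.
by rewrite lee_fin (functionalB hf) (functionalD hf); lra.
Qed.

End Displacement.

Theorem corollary4p16 (R : realType) (X : completeNormedModType R)
    (A B : set X) (v e : X) (f : X -> R) :
  norm_from_inner_product (X := X) ->
  closed_convex_nonempty A -> closed_convex_nonempty B ->
  displacement A B v ->
  A e -> B (e + v) ->
  linear_functional f -> continuous f -> dual_norm f = 1 ->
  ereal_inf [set (f (b - v))%:E | b in B] = (f e)%:E ->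
  ereal_sup [set (f a)%:E | a in A] = (f e)%:E ->
  strongly_exposes f A e ->
  stable A B.
Proof.
(* the hypothesis on [sup f(A)] is also part of [strongly_exposes f A e] *)
move=> [ip hip] [_ hA A0] [_ hB B0] hdisp Ae Bev hf cf dn hinf _ exposed.
have f_le_norm x : `|f x| <= `|x|.
  by rewrite -[`|x|]mul1r -dn; exact: functional_le_dual_norm.
have v_le_dist a b : A a -> B b -> `|v| <= `|b - a| by exact: displacement_le_dist.
have f_min_B b : B b -> f (e + v) <= f b by exact: le_of_ereal_inf_shift.
have [EAe FBev] := Eset_Fset_displacement v_le_dist Ae Bev.
split; first by exists e.
split; first by exists (e + v).
move=> As Bs hAs hBs AsA BsB a0 a b [_ hAP].
have [ae bev] := perturbed_AP_cvg hip hf f_le_norm hA hB A0 B0 Ae Bev f_min_B v_le_dist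
  exposed hAs hBs AsA BsB hAP.
by split; [exact: cvgP ae | exact: cvgP bev].
Qed.
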